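(* Let $T,S$ be two causal teams over $\sigma$ with $T\approx S$, or two generalized causal teams over $\sigma$ with $T\approx S$. Then for every formula $\varphi$ of $\mathcal{CO}[\sigma]$, $\mathcal{CO}_{\sqcup}[\sigma]$ or $\mathcal{COD}[\sigma]$, we have $T\models\varphi$ if and only if $S\models\varphi$ (with $\models^c$ for causal teams, $\models^g$ for generalized causal teams).
   Context: A signature $\sigma=(\mathrm{Dom},\mathrm{Ran})$: $\mathrm{Dom}$ nonempty finite set of variables, each $X$ with nonempty finite range $\mathrm{Ran}(X)$. $\mathbf X=\mathbf x$ abbreviates $X_1=x_1\wedge\dots\wedge X_n=x_n$ ($\mathbf x\in\mathrm{Ran}(\mathbf X)=\prod_i\mathrm{Ran}(X_i)$); inconsistent if it contains $X=x,X=x'$ with $x\ne x'$. Languages: $\mathcal{CO}[\sigma]$: $\alpha::=X=x\mid\neg\alpha\mid\alpha\wedge\alpha\mid\alpha\vee\alpha\mid\mathbf X=\mathbf x\;\Box\!\!\rightarrow\alpha$; $\mathcal{CO}_{\sqcup}[\sigma]$: $\varphi::=X=x\mid\neg\alpha\mid\varphi\wedge\varphi\mid\varphi\vee\varphi\mid\varphi\sqcup\varphi\mid\mathbf X=\mathbf x\;\Box\!\!\rightarrow\varphi$; $\mathcal{COD}[\sigma]$: $\varphi::=X=x\mid{=}(\mathbf X;Y)\mid\neg\alpha\mid\varphi\wedge\varphi\mid\varphi\vee\varphi\mid\mathbf X=\mathbf x\;\Box\!\!\rightarrow\varphi$ (always $\alpha\in\mathcal{CO}[\sigma]$). Assignments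 $s$ ($s(X)\in\mathrm{Ran}(X)$) form $\mathbb A_\sigma$. A system of functions $\mathcal F$ gives for each $V\in\mathrm{En}(\mathcal F)\subseteq\mathrm{Dom}$ parents $PA^{\mathcal F}_V\subseteq\mathrm{Dom}\setminus\{V\}$ and $\mathcal F_V:\mathrm{Ran}(PA^{\mathcal F}_V)\to\mathrm{Ran}(V)$; $\mathrm{Ex}(\mathcal F)=\mathrm{Dom}\setminus\mathrm{En}(\mathcal F)$; only recursive (acyclic parent graph) systems, forming $\mathbb F_\sigma$. $s$ compatible with $\mathcal F$: $s(V)=\mathcal F_V(s(PA^{\mathcal F}_V))$ for $V\in\mathrm{En}(\mathcal F)$; $\mathbb S_\sigma$ the set of compatible pairs. For consistent $\mathbf X=\mathbf x$: $\mathcal F_{\mathbf X=\mathbf x}$ restricts $\mathcal F$ to $\mathrm{En}(\mathcal F)\setminus\mathbf X$; $s^{\mathcal F}_{\mathbf X=\mathbf x}$: $X_i\mapsto x_i$, $V\mapsto s(V)$ on $\mathrm{Ex}(\mathcal F)\setminus\mathbf X$, $V\mapsto\mathcal F_V(s^{\mathcal F}_{\mathbf X=\mathbf x}(PA^{\mathcal F}_V))$ on $\mathrm{En}(\mathcal F)\setminus\mathbf X$. Causal team $T=(T^-,\mathcal F)$: $T^-$ a set of assignments compatible with $\mathcal F$; empty team components identified as $\emptyset$; causal subteams $(S^-,\mathcal F)$ with $S^-\subseteq T^-$; $T_{\mathbf X=\mathbf x}=(\{s^{\mathcal F}_{\mathbf X=\mathbf x}:s\in T^-\},\mathcal F_{\mathbf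 X=\mathbf x})$. $\models^c$: $T\models X=x$ iff all $s\in T^-$ have $s(X)=x$; $T\models{=}(\mathbf X;Y)$ iff $s(\mathbf X)=s'(\mathbf X)$ implies $s(Y)=s'(Y)$ for $s,s'\in T^-$; $T\models\neg\alpha$ iff $(\{s\},\mathcal F)\not\models\alpha$ for all $s\in T^-$; $\wedge$ classical; $T\models\varphi\vee\psi$ iff there are causal subteams $T_1,T_2$ with $T_1^-\cup T_2^-=T^-$, $T_1\models\varphi$, $T_2\models\psi$; $T\models\varphi\sqcup\psi$ iff $T\models\varphi$ or $T\models\psi$; $T\models\mathbf X=\mathbf x\;\Box\!\!\rightarrow\varphi$ iff $\mathbf X=\mathbf x$ inconsistent or $T_{\mathbf X=\mathbf x}\models\varphi$. Generalized causal team: $T\subseteq\mathbb S_\sigma$, $T^-=\{s:(s,\mathcal F)\in T\}$, $T_{\mathbf X=\mathbf x}=\{(s^{\mathcal F}_{\mathbf X=\mathbf x},\mathcal F_{\mathbf X=\mathbf x}):(s,\mathcal F)\in T\}$; $\models^g$: same clauses but $T\models\neg\alpha$ iff $\{(s,\mathcal F)\}\not\models\alpha$ for all $(s,\mathcal F)\in T$, and $T\models\varphi\vee\psi$ iff $T=T_1\cup T_2$, $T_1\models\varphi$, $T_2\models\psi$. Equivalence: $\mathrm{Cn}(\mathcal F)=\{V\in\mathrm{En}(\mathcal F):\mathcal F_V\text{ constant}\}$; $\mathcal F_V\sim\mathcal G_V$ iff $\mathcal F_V(\mathbf x\mathbf y)=\mathcal G_V(\mathbf x\mathbf z)$ for all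 $\mathbf x\in\mathrm{Ran}(PA^{\mathcal F}_V\cap PA^{\mathcal G}_V)$, $\mathbf y\in\mathrm{Ran}(PA^{\mathcal F}_V\setminus PA^{\mathcal G}_V)$, $\mathbf z\in\mathrm{Ran}(PA^{\mathcal G}_V\setminus PA^{\mathcal F}_V)$; $\mathcal F\sim\mathcal G$ iff $\mathrm{En}(\mathcal F)\setminus\mathrm{Cn}(\mathcal F)=\mathrm{En}(\mathcal G)\setminus\mathrm{Cn}(\mathcal G)$ and $\mathcal F_V\sim\mathcal G_V$ for each such $V$. Nonempty causal teams $(T^-,\mathcal F)\approx(S^-,\mathcal G)$ iff $T^-=S^-$ and $\mathcal F\sim\mathcal G$. Generalized: $T^{\mathcal F}=\{(s,\mathcal G)\in T:\mathcal G\sim\mathcal F\}$ and $S\approx T$ iff $(S^{\mathcal F})^-=(T^{\mathcal F})^-$ for all $\mathcal F\in\mathbb F_\sigma$. *)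

From HB Require Import structures.
From mathcomp Require Import all_boot.
Set Implicit Arguments. Unset Strict Implicit. Unset Printing Implicit Defensive.

Section Causal.
Variables (V : finType) (R : V -> finType).

Definition assign := {dffun forall v : V, R v}.

(* A system of functions: for each variable v, [Fn v] is [None] iff v is
   exogenous, and [Some f] with f : assignments -> Ran(v) iff v is endogenous;
   [PA v] is the parent set. f represents F_v : Ran(PA_v) -> Ran(v) via the
   well-formedness condition that f only depends on the PA_v-coordinates. *)
Record sysfun := Sysfun {
  PA : {ffun V -> {set V}};
  Fn : {dffun forall v : V, option {ffun assign -> R v}} }.

Definition En (F : sysfun) : {set V} := [set v | Fn F v != None].

Definition parent_rel (F : sysfun) : rel V := fun u v => u \in PA F v.

(* Membership in F_sigma: well-formed and recursive (acyclic). *)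
Definition wf (F : sysfun) : Prop :=
  [/\ (forall v, Fn F v = None -> PA F v = set0),
      (forall v, v \notin PA F v),
      (forall v f, Fn F v = Some f ->
         forall s t : assign, (forall u, u \in PA F v -> s u = t u) -> f s = f t)
    & (forall u v, parent_rel F u v -> ~~ connect (parent_rel F) v u)].

Definition compatible (F : sysfun) (s : assign) : Prop :=
  forall v f, Fn F v = Some f -> s v = f s.

Definition interv_t := seq {v : V & R v}.

Definition inXs (X : interv_t) (v : V) : bool := has (fun p => tag p == v) X.

Definition consistent (X : interv_t) : Prop :=
  forall p q, p \in X -> q \in X -> tag p = tag q -> p = q.

Definition restrict (F : sysfun) (X : interv_t) : sysfun :=
  Sysfun [ffun v => if inXs X v then set0 else PA F v]
         [ffun v => if inXs X v then None else Fn F v].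

(* t = s^F_{X=x}: the clauses of the (recursive) definition of the
   intervened assignment. *)
Definition interv (F : sysfun) (X : interv_t) (s t : assign) : Prop :=
  [/\ (forall p, p \in X -> t (tag p) = tagged p),
      (forall v, ~~ inXs X v -> Fn F v = None -> t v = s v)
    & (forall v f, ~~ inXs X v -> Fn F v = Some f -> t v = f t)].

Inductive form : Type :=
  | Atm (v : V) (x : R v)
  | Dep (Xs : seq V) (y : V)
  | Neg (a : form)
  | And (a b : form)
  | Or (a b : form)
  | Tor (a b : form)
  | Cf (X : interv_t) (a : form).

Fixpoint isCO (phi : form) : bool :=
  match phi with
  | Atm _ _ => true
  | Dep _ _ => false
  | Neg a => isCO a
  | And a b | Or a b => isCO a && isCO b
  | Tor _ _ => false
  | Cf _ a => isCO a
  end.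

Fixpoint isCOsq (phi : form) : bool :=
  match phi with
  | Atm _ _ => true
  | Dep _ _ => false
  | Neg a => isCO a
  | And a b | Or a b | Tor a b => isCOsq a && isCOsq b
  | Cf _ a => isCOsq a
  end.

Fixpoint isCOD (phi : form) : bool :=
  match phi with
  | Atm _ _ | Dep _ _ => true
  | Neg a => isCO a
  | And a b | Or a b => isCOD a && isCOD b
  | Tor _ _ => false
  | Cf _ a => isCOD a
  end.

Definition causal_team (F : sysfun) (T : assign -> Prop) : Prop :=
  wf F /\ forall s, T s -> compatible F s.

Fixpoint sat_c (phi : form) : sysfun -> (assign -> Prop) -> Prop :=
  match phi with
  | Atm v x => fun F T => forall s, T s -> s v = x
  | Dep Xs y => fun F T => forall s s', T s -> T s' ->
        (forall u, u \in Xs -> s u = s' u) -> s y = s' y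
  | Neg a => fun F T => forall s, T s -> ~ sat_c a F (fun t => t = s)
  | And a b => fun F T => sat_c a F T /\ sat_c b F T
  | Or a b => fun F T => exists T1 T2 : assign -> Prop,
        [/\ (forall s, T1 s -> T s), (forall s, T2 s -> T s),
            (forall s, T s -> T1 s \/ T2 s), sat_c a F T1 & sat_c b F T2]
  | Tor a b => fun F T => sat_c a F T \/ sat_c b F T
  | Cf X a => fun F T => ~ consistent X \/
        sat_c a (restrict F X) (fun t => exists s, T s /\ interv F X s t)
  end.

Definition gteam (T : assign -> sysfun -> Prop) : Prop :=
  forall s F, T s F -> wf F /\ compatible F s.

Fixpoint sat_g (phi : form) : (assign -> sysfun -> Prop) -> Prop :=
  match phi with
  | Atm v x => fun T => forall s F, T s F -> s v = x
  | Dep Xs y => fun T => forall s F s' F', T s F -> T s' F' ->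
        (forall u, u \in Xs -> s u = s' u) -> s y = s' y
  | Neg a => fun T => forall s F, T s F ->
        ~ sat_g a (fun s' F' => s' = s /\ F' = F)
  | And a b => fun T => sat_g a T /\ sat_g b T
  | Or a b => fun T => exists T1 T2 : assign -> sysfun -> Prop,
        [/\ (forall s F, T1 s F -> T s F), (forall s F, T2 s F -> T s F),
            (forall s F, T s F -> T1 s F \/ T2 s F), sat_g a T1 & sat_g b T2]
  | Tor a b => fun T => sat_g a T \/ sat_g b T
  | Cf X a => fun T => ~ consistent X \/
        sat_g a (fun t G' => exists s G, [/\ T s G, interv G X s t & G' = restrict G X])
  end.

Definition Cn (F : sysfun) : {set V} :=
  [set v | if Fn F v is Some f then [forall s, forall t, f s == f t] else false].

Definition sim_fun (F G : sysfun) (v : V) : Prop :=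
  forall f g, Fn F v = Some f -> Fn G v = Some g ->
  forall s t : assign, (forall u, u \in PA F v :&: PA G v -> s u = t u) -> f s = g t.

Definition simF (F G : sysfun) : Prop :=
  En F :\: Cn F = En G :\: Cn G /\ forall v, v \in En F :\: Cn F -> sim_fun F G v.

(* (T^-,F) ~ (S^-,G): same assignment set, and F ~ G (the latter only
   required for nonempty teams; empty teams are all identified with the
   empty team). *)
Definition approx_c (F : sysfun) (T : assign -> Prop) (G : sysfun) (S : assign -> Prop) : Prop :=
  (forall s, T s <-> S s) /\ ((exists s, T s) -> simF F G).

(* generalized: (S^F)^- = (T^F)^- for every F in F_sigma *)
Definition approx_g (T S : assign -> sysfun -> Prop) : Prop :=
  forall F, wf F -> forall s,
    (exists G, T s G /\ simF G F) <-> (exists G, S s G /\ simF G F).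

End Causal.

(* Satisfaction inspects a team only through its assignments and through the
   intervened assignments s^F_{X=x}.  When s is compatible with F, a constant
   endogenous variable already takes the value s(v), so s^F_{X=x} is determined
   by s and the non-constant endogenous functions of F, read pointwise; these
   coincide for equivalent systems.  A causal team (T^-, F) satisfies exactly
   what the generalized team {(s, F) : s in T^-} satisfies, so both cases follow
   from one induction on formulas for the relation "every pair (s, F) of one
   team has a partner (s, G) in the other with G equivalent to F", which is
   stable under subteams, singletons and interventions.  No restriction to the
   fragments CO, CO_sqcup or COD is needed. *)
From Stdlib Require Import Setoid.
From mathcomp Require Import all_boot.
Set Implicit Arguments. Unset Strict Implicit. Unset Printing Implicit Defensive.

Section Invariance.
Variables (V : finType) (R : V -> finType).
Implicit Types (F G : sysfun R) (s t : assign R) (X : interv_t R).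

Definition noncst F : {set V} := En F :\: Cn F.

Definition sys_equiv F G :=
  noncst F = noncst G /\
  forall v f g, v \in noncst F -> Fn F v = Some f -> Fn G v = Some g -> f =1 g.

Lemma mem_noncst F v : (v \in noncst F) = (Fn F v != None) && (v \notin Cn F).
Proof. by rewrite !inE andbC. Qed.

Lemma mem_noncst_restrict F X v :
  (v \in noncst (restrict F X)) = ~~ inXs X v && (v \in noncst F).
Proof. by rewrite !mem_noncst !inE /= !ffunE; case: (inXs X v). Qed.

Lemma sys_equiv_sym F G : sys_equiv F G -> sys_equiv G F.
Proof.
case=> EN Ef; split=> // v g f; rewrite -EN => vF GN FN s.
by rewrite (Ef v f g vF FN GN s).
Qed.

Lemma sys_equiv_restrict F G X :
  sys_equiv F G -> sys_equiv (restrict F X) (restrict G X).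
Proof.
case=> EN Ef; split; first by apply/setP=> v; rewrite !mem_noncst_restrict EN.
move=> v f g; rewrite mem_noncst_restrict => /andP[nX vF] /=.
by rewrite !ffunE (negbTE nX); apply: Ef.
Qed.

Lemma sim_fun_sym F G v : sim_fun F G v -> sim_fun G F v.
Proof.
move=> h g f GN FN s t agr; symmetry; apply: (h f g FN GN t s) => u.
by rewrite setIC => /agr/esym.
Qed.

Lemma simF_sym F G : simF F G -> simF G F.
Proof. by case=> E h; split=> // v; rewrite -E => /h /sim_fun_sym. Qed.

Lemma simF_refl F : wf F -> simF F F.
Proof.
case=> _ _ Fdep _; split=> // v _ f g FN; rewrite FN => -[<-] s t agr.
by apply: (Fdep v f FN s t) => u uP; apply: agr; rewrite setIid.
Qed.

Lemma simF_sys_equiv F G : simF F G -> sys_equiv F G.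
Proof. by case=> E h; split=> // v f g /h vFG FN GN s; apply: vFG. Qed.

Lemma Cn_compatible F s v f :
  compatible F s -> Fn F v = Some f -> v \in Cn F -> forall t, f t = s v.
Proof.
move=> cF FN; rewrite inE FN => /forallP fcst t.
by rewrite (cF v f FN); apply/eqP/(forallP (fcst t)).
Qed.

Lemma interv_noncst_fixed F X s t v :
  compatible F s -> interv F X s t -> ~~ inXs X v -> v \notin noncst F ->
  t v = s v.
Proof.
move=> cF [_ Fex Fen] nX; rewrite mem_noncst negb_and !negbK.
case FN: (Fn F v) => [f|] /=; last by rewrite Fex.
by move=> vC; rewrite (Fen v f nX FN) (Cn_compatible cF FN vC).
Qed.

Lemma interv_sys_equiv F G X s t :
  compatible F s -> compatible G s -> sys_equiv F G ->
  interv F X s t -> interv G X s t.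
Proof.
move=> cF cG [EN Ef] itF; have [FX _ Fen] := itF; split=> // v.
  by move=> nX GN; apply: interv_noncst_fixed cF itF nX _; rewrite EN mem_noncst GN.
move=> g nX GN; case: (boolP (v \in Cn G)) => vC.
  rewrite (Cn_compatible cG GN vC) (interv_noncst_fixed cF itF nX) //.
  by rewrite EN mem_noncst vC andbF.
have : v \in noncst F by rewrite EN mem_noncst GN vC.
case FN: (Fn F v) => [f|]; last by rewrite mem_noncst FN.
by move=> vF; rewrite (Fen v f nX FN) (Ef v f g vF FN GN).
Qed.

Lemma interv_compatible F X s t : interv F X s t -> compatible (restrict F X) t.
Proof. by case=> _ _ Fen v f /=; rewrite ffunE; case: ifP => // /negbT; apply: Fen. Qed.

Definition single s F : assign R -> sysfun R -> Prop :=
  fun s' F' => s' = s /\ F' = F.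

Definition interv_team X (T : assign R -> sysfun R -> Prop) :=
  fun t G' => exists s G, [/\ T s G, interv G X s t & G' = restrict G X].

Definition team_sim (T S : assign R -> sysfun R -> Prop) :=
  forall s F, T s F -> compatible F s /\ exists2 G, S s G & sys_equiv F G.

Definition sim_part (T1 S : assign R -> sysfun R -> Prop) :=
  fun s G => S s G /\ exists2 F, T1 s F & sys_equiv G F.

Lemma team_sim_single F G s :
  compatible F s -> compatible G s -> sys_equiv F G ->
  team_sim (single s F) (single s G).
Proof. by move=> cF _ e s' F' [-> ->]; split=> //; exists G. Qed.

Lemma team_sim_part T S T1 :
  (forall s F, T1 s F -> T s F) -> team_sim T S -> team_sim S T ->
  team_sim T1 (sim_part T1 S) /\ team_sim (sim_part T1 S) T1.
Proof.
move=> sub hTS hST; split.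
  move=> s F T1F; have [cF [G SG e]] := hTS s F (sub s F T1F).
  by split=> //; exists G => //; split=> //; exists F => //; apply: sys_equiv_sym.
by move=> s G [SG [F T1F e]]; split; [apply: (hST s G SG).1 | exists F].
Qed.

Lemma team_sim_interv T S X :
  team_sim T S -> team_sim S T -> team_sim (interv_team X T) (interv_team X S).
Proof.
move=> hTS hST t _ [s [F [TF itF ->]]].
have [cF [G SG e]] := hTS s F TF; have cG := (hST s G SG).1.
split; first exact: interv_compatible itF.
exists (restrict G X); last exact: sys_equiv_restrict.
by exists s, G; split=> //; apply: interv_sys_equiv cF cG e itF.
Qed.

Theorem sat_g_team_sim (phi : form R) :
  forall T S, team_sim T S -> team_sim S T -> sat_g phi T -> sat_g phi S.
Proof.
elim: phi => [v x|Xs y|a IHa|a IHa b IHb|a IHa b IHb|a IHa b IHb|X a IHa]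
  T S hTS hST /=.
- by move=> H s G /hST [_ [F TF _]]; apply: H TF.
- move=> H s G s' G' /hST [_ [F TF _]] /hST [_ [F' TF' _]].
  exact: H TF TF'.
- move=> H s G SG aG; have [cG [F TF e]] := hST s G SG.
  have cF := (hTS s F TF).1.
  apply: (H s F TF); apply: IHa aG; apply: team_sim_single => //.
  exact: sys_equiv_sym.
- by case=> aT bT; split; [apply: IHa aT | apply: IHb bT].
- case=> T1 [T2 [sub1 sub2 cov aT1 bT2]].
  have [h1 h1'] := team_sim_part sub1 hTS hST.
  have [h2 h2'] := team_sim_part sub2 hTS hST.
  exists (sim_part T1 S), (sim_part T2 S); split; try by move=> s G [].
  + move=> s G SG; have [_ [F TF e]] := hST s G SG.
    by case: (cov s F TF) => h; [left | right]; split=> //; exists F.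
  + exact: IHa aT1.
  + exact: IHb bT2.
- by case=> [aT | bT]; [left; apply: IHa aT | right; apply: IHb bT].
- case=> [nc | aT]; [by left | right].
  by apply: IHa aT; apply: team_sim_interv.
Qed.

Definition gteam_of F (T : assign R -> Prop) : assign R -> sysfun R -> Prop :=
  fun s G => T s /\ G = F.

Lemma sat_c_gteam (phi : form R) :
  forall F T U, (forall s G, U s G <-> T s /\ G = F) ->
  (sat_c phi F T <-> sat_g phi U).
Proof.
elim: phi => [v x|Xs y|a IHa|a IHa b IHb|a IHa b IHb|a IHa b IHb|X a IHa]
  F T U UT /=.
- split=> H s; first by move=> G /UT [Ts _]; apply: H.
  by move=> Ts; apply: (H s F); apply/UT.
- split=> H s; first by move=> G s' G' /UT [Ts _] /UT [Ts' _]; apply: H.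
  by move=> s' Ts Ts'; apply: (H s F s' F); apply/UT.
- have sat_single s : sat_c a F (eq^~ s) <-> sat_g a (single s F).
    exact: IHa.
  split=> H s; first by move=> G /UT [Ts ->] /sat_single; apply: H.
  by move=> Ts /sat_single; apply: H; apply/UT.
- by rewrite (IHa F T U UT) (IHb F T U UT).
- have sub_graph U' : (forall s G, U' s G -> U s G) ->
      forall s G, U' s G <-> U' s F /\ G = F.
    move=> sub s G; split=> [h | [h ->]] //.
    by have [_ E] := (UT s G).1 (sub s G h); subst G.
  split.
    case=> T1 [T2 [sub1 sub2 cov aT1 bT2]].
    exists (gteam_of F T1), (gteam_of F T2); split.
    + by move=> s G [/sub1 Ts ->]; apply/UT.
    + by move=> s G [/sub2 Ts ->]; apply/UT.
    + by move=> s G /UT [/cov [] h ->]; [left | right].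
    + exact/(IHa F T1).
    + exact/(IHb F T2).
  case=> U1 [U2 [sub1 sub2 cov aU1 bU2]].
  exists (fun s => U1 s F), (fun s => U2 s F); split.
  + by move=> s /sub1 /UT [].
  + by move=> s /sub2 /UT [].
  + by move=> s Ts; apply: cov; apply/UT.
  + exact/(IHa F _ U1 (sub_graph U1 sub1)).
  + exact/(IHb F _ U2 (sub_graph U2 sub2)).
- by rewrite (IHa F T U UT) (IHb F T U UT).
- suff -> : sat_c a (restrict F X) (fun t => exists s, T s /\ interv F X s t) <->
            sat_g a (interv_team X U) by [].
  apply: IHa => t G'; split.
    by case=> s [G [/UT [Ts ->] itF ->]]; split=> //; exists s.
  by case=> -[s [Ts itF]] ->; exists s, F; split=> //; apply/UT.
Qed.

Corollary sat_c_gteam_of (phi : form R) F T :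
  sat_c phi F T <-> sat_g phi (gteam_of F T).
Proof. exact: sat_c_gteam. Qed.

Lemma approx_c_sym F G T S : approx_c F T G S -> approx_c G S F T.
Proof.
case=> TS E; split=> [s | [s Ss]]; first by rewrite TS.
by apply/simF_sym/E; exists s; apply/TS.
Qed.

Lemma approx_c_team_sim F G T S :
  (forall s, T s -> compatible F s) -> approx_c F T G S ->
  team_sim (gteam_of F T) (gteam_of G S).
Proof.
move=> cT [TS E] s _ [Ts ->]; split; first exact: cT.
by exists G; [split=> //; apply/TS | apply/simF_sys_equiv/E; exists s].
Qed.

Lemma approx_g_sym (T S : assign R -> sysfun R -> Prop) : approx_g T S -> approx_g S T.
Proof. by move=> A F wF s; rewrite A. Qed.

Lemma approx_g_team_sim (T S : assign R -> sysfun R -> Prop) : gteam T -> approx_g T S -> team_sim T S.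
Proof.
move=> gT A s F TF; have [wF cF] := gT s F TF.
have [G [SG e]] := (A F wF s).1 (ex_intro _ F (conj TF (simF_refl wF))).
by split=> //; exists G => //; apply/sys_equiv_sym/simF_sys_equiv.
Qed.

End Invariance.

Theorem theorem3p3 (V : finType) (R : V -> finType)
    (HV : 0 < #|V|) (HR : forall v, 0 < #|R v|) :
  (forall (F G : sysfun R) (T S : assign R -> Prop),
      causal_team F T -> causal_team G S -> approx_c F T G S ->
      forall phi : form R, isCO phi || isCOsq phi || isCOD phi ->
      (sat_c phi F T <-> sat_c phi G S))
  /\
  (forall T S : assign R -> sysfun R -> Prop,
      gteam T -> gteam S -> approx_g T S ->
      forall phi : form R, isCO phi || isCOsq phi || isCOD phi ->
      (sat_g phi T <-> sat_g phi S)).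
Proof.
split.
- move=> F G T S [_ cT] [_ cS] A phi _.
  have hTS := approx_c_team_sim cT A.
  have hST := approx_c_team_sim cS (approx_c_sym A).
  by rewrite !sat_c_gteam_of; split; apply: sat_g_team_sim.
- move=> T S gT gS A phi _.
  have hTS := approx_g_team_sim gT A.
  have hST := approx_g_team_sim gS (approx_g_sym A).
  by split; apply: sat_g_team_sim.
Qed.
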